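(* Let $C_n$ denote the $n$th Catalan number, with $C_0=C_1=1$. Then for every integer $n>1$, $$C_n=\sum_{j\ge 1}(-1)^{j-1}\,C_{n-j}\binom{n-j+1}{j},$$ where the sum runs over $1\le j\le n$.
   Context: $C_n=\frac{1}{n+1}\binom{2n}{n}$. Convention: $\binom{a}{b}=0$ if $b<0$ or $b>a$. *)

From mathcomp Require Import all_boot all_order all_algebra.
Set Implicit Arguments. Unset Strict Implicit. Unset Printing Implicit Defensive.

(* Catalan number C_n = binom(2n, n) / (n+1); the division is exact. *)
Definition catalan (n : nat) : nat := 'C(2 * n, n) %/ n.+1.

From mathcomp Require Import all_boot all_order all_algebra.
From mathcomp Require Import ring zify.
Import GRing.Theory Num.Theory.

(* Write S_k = sum_(i <= k) (-1)^i C_(n-i) binom(n-i+1, i).  The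
   theorem says exactly that the full alternating sum S_n vanishes (its i = 0
   term is C_n).  The sum telescopes: with
     T_k = (n-k)(n-k+1) binom(n-k-1, k) C_(n-k)
   one has n(n+1) S_k = (-1)^k T_k for every k <= n, and T_n = 0.
   The telescoping step n(n+1) C_(n-k-1) binom(n-k, k+1) = T_k + T_(k+1) follows
   from the Catalan recurrence (m+2) C_(m+1) = 2(2m+1) C_m and a three-term
   identity between binomial coefficients, both proved first over nat. *)

(* (m+1) C_m = binom(2m, m): the division defining catalan is exact, because
   binom(2m, m) = (m+1) (binom(2m, m) - binom(2m, m+1)). *)
Lemma catalan_mul_succ m : (m.+1 * catalan m = 'C(2 * m, m))%N.
Proof.
have shift : (m.+1 * 'C(2 * m, m.+1) = m * 'C(2 * m, m))%N.
  by rewrite mul_bin_left (_ : 2 * m - m = m)%N //; lia.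
rewrite /catalan.
have -> : 'C(2 * m, m) = (m.+1 * ('C(2 * m, m) - 'C(2 * m, m.+1)))%N.
  by rewrite mulnBr shift; lia.
by rewrite mulKn.
Qed.

(* The first-order recurrence (m+2) C_(m+1) = 2(2m+1) C_m;
   after multiplying by m+1 it becomes the binomial identity
   (m+1) binom(2m+2, m+1) = 2(2m+1) binom(2m, m). *)
Lemma catalan_succ m : ((m + 2) * catalan m.+1 = 2 * (2 * m + 1) * catalan m)%N.
Proof.
apply/eqP; rewrite -(eqn_pmul2l (ltn0Sn m)); apply/eqP.
have -> : (m.+1 * ((m + 2) * catalan m.+1) = m.+1 * (m.+2 * catalan m.+1))%N by ring.
have -> : (m.+1 * (2 * (2 * m + 1) * catalan m)
           = 2 * (2 * m + 1) * (m.+1 * catalan m))%N by ring.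
rewrite !catalan_mul_succ -mul_bin_diag.
have -> : (2 * m.+1).-1 = (2 * m).+1 by lia.
have down := mul_bin_down (2 * m).+1 m.
rewrite /= (_ : (2 * m).+1 - m = m.+1)%N in down; last by lia.
by rewrite -mulnA -down; ring.
Qed.

(* After multiplying by k+1, every coefficient is reduced to multiples of
   binom(m, k) and binom(m, k+1) by the absorption identities. *)
Lemma binomial_three_term m k :
  ((m + k + 1) * (m + k + 2) * 'C(m.+1, k.+1) =
   m * m.+1 * 'C(m.-1, k.+1) + 2 * (2 * m + 1) * m.+1 * 'C(m, k))%N.
Proof.
have left := mul_bin_left m k.
have diag := mul_bin_diag m.+1 k.
have down := mul_bin_down m k.+1.
rewrite /= in diag.
apply/eqP; rewrite -(eqn_pmul2l (ltn0Sn k)); apply/eqP.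
have [le_km | lt_mk] := leqP k m; last by rewrite !bin_small in left diag down *; lia.
have [d def_m] : exists d, m = (k + d)%N by exists (m - k); lia.
subst m.
rewrite (_ : k + d - k = d)%N in left; last by lia.
rewrite (_ : k + d - k.+1 = d.-1)%N in down; last by lia.
move: left diag down.
set B := 'C(k + d, k); set X := 'C((k + d).+1, k.+1).
set Y := 'C(k + d, k.+1); set Z := 'C((k + d).-1, k.+1).
move=> left diag down.
have -> : (k.+1 * ((k + d + k + 1) * (k + d + k + 2) * X) =
           (k + d + k + 1) * (k + d + k + 2) * (k.+1 * X))%N by ring.
rewrite -diag.
have -> : (k.+1 * ((k + d) * (k + d).+1 * Z + 2 * (2 * (k + d) + 1) * (k + d).+1 * B)
    = ((k + d).+1 * ((k + d) * Z)) * k.+1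
      + k.+1 * 2 * (2 * (k + d) + 1) * (k + d).+1 * B)%N by ring.
rewrite down.
have -> : ((k + d).+1 * (d.-1 * Y) * k.+1 = (k + d).+1 * d.-1 * (k.+1 * Y))%N by ring.
rewrite left.
by clearbody B X Y Z; case: d {left diag down le_km} => [|e] /=; ring.
Qed.

Definition tail_term (n k : nat) : nat :=
  (n - k) * (n - k).+1 * 'C((n - k).-1, k) * catalan (n - k).

Lemma tail_term_last n : tail_term n n = 0%N.
Proof. by rewrite /tail_term subnn. Qed.

Lemma tail_term_step n k : (k < n)%N ->
  (n * n.+1 * (catalan (n - k.+1) * 'C(n - k.+1 + 1, k.+1)) =
   tail_term n k + tail_term n k.+1)%N.
Proof.
move=> lt_kn; have [m ->] : exists m, n = (m + k.+1)%N by exists (n - k.+1)%N; lia.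
rewrite /tail_term (_ : m + k.+1 - k = m.+1)%N; last by lia.
rewrite (_ : m + k.+1 - k.+1 = m)%N; last by lia.
rewrite addn1 /=.
transitivity ((m + k + 1) * (m + k + 2) * 'C(m.+1, k.+1) * catalan m)%N; first by ring.
rewrite binomial_three_term.
have -> : (m.+1 * m.+2 * 'C(m, k) * catalan m.+1 =
           m.+1 * 'C(m, k) * ((m + 2) * catalan m.+1))%N by ring.
rewrite catalan_succ; ring.
Qed.

Local Open Scope ring_scope.

Definition alt_term (n i : nat) : int :=
  (-1) ^+ i * (catalan (n - i))%:Z * ('C(n - i + 1, i))%:Z.

Lemma alt_partial_sum n k : (k <= n)%N ->
  (n * n.+1)%:Z * \sum_(i < k.+1) alt_term n i = (-1) ^+ k * (tail_term n k)%:Z.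
Proof.
elim: k => [|k IH] le_kn.
  by rewrite big_ord1 /alt_term /tail_term subn0 !bin0 expr0 !mul1r mulr1 -!PoszM muln1.
rewrite big_ord_recr /= mulrDr IH; last exact: ltnW.
have step := congr1 Posz (tail_term_step n k le_kn); rewrite PoszD in step.
have -> : (n * n.+1)%:Z * alt_term n k.+1 =
          (-1) ^+ k.+1 * (n * n.+1 * (catalan (n - k.+1) * 'C(n - k.+1 + 1, k.+1)))%N%:Z.
  by rewrite /alt_term !PoszM; ring.
by rewrite step exprS; ring.
Qed.

Lemma alt_sum_eq0 n : (0 < n)%N -> \sum_(i < n.+1) alt_term n i = 0.
Proof.
move=> n_gt0; have := alt_partial_sum n n (leqnn n).
rewrite tail_term_last mulr0 => /eqP; rewrite mulf_eq0 => /orP [|/eqP //].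
by move/eqP; lia.
Qed.

Theorem theorem2 (n : nat) : (1 < n)%N ->
  (catalan n)%:Z =
  \sum_(1 <= j < n.+1) (-1) ^+ (j.-1) * (catalan (n - j))%:Z * ('C(n - j + 1, j))%:Z.
Proof.
move=> lt1n; have := alt_sum_eq0 n (ltnW lt1n).
rewrite -(big_mkord xpredT (alt_term n)) big_ltn //.
rewrite {1}/alt_term subn0 bin0 expr0 mul1r mulr1 => /eqP; rewrite addr_eq0 => /eqP ->.
rewrite -sumrN; apply: eq_big_nat => j /andP [j_gt0 _].
by case: j j_gt0 => // j _; rewrite /alt_term exprS; ring.
Qed.
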